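(* Let $G$ be a graph with adjacency matrix $A$, signless Laplacian $Q$, and maximum degree $\Delta$. (i) If $0\le\alpha\le1/2$, then $\rho(A_\alpha(G))\le\alpha\rho(Q)+(1-2\alpha)\rho(A)$. If $G$ is connected and irregular, equality holds if and only if $\alpha=0$ or $\alpha=1/2$. (ii) If $1/2\le\alpha\le1$, then $\rho(A_\alpha(G))\le(1-\alpha)\rho(Q)+(2\alpha-1)\Delta$. If $G$ is connected and irregular, equality holds if and only if $\alpha=1/2$ or $\alpha=1$.
   Context: For a graph $G$, $A(G)$ is the adjacency matrix, $D(G)$ the diagonal degree matrix, $Q(G)=D(G)+A(G)$ the signless Laplacian, and $A_\alpha(G)=\alpha D(G)+(1-\alpha)A(G)$ for $\alpha\in[0,1]$. $\rho(M)$ is the largest eigenvalue of a real symmetric matrix $M$. A graph is irregular if not all its vertices have the same degree. *)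

From HB Require Import structures.
From mathcomp Require Import all_boot all_order all_algebra.
Set Implicit Arguments. Unset Strict Implicit. Unset Printing Implicit Defensive.
Import Order.TTheory GRing.Theory Num.Theory.
Local Open Scope ring_scope.

Definition simple_graph n (e : rel 'I_n) := symmetric e /\ irreflexive e.

Definition deg n (e : rel 'I_n) (i : 'I_n) : nat := #|[pred j | e i j]|.

Definition maxdeg n (e : rel 'I_n) : nat := (\max_(i : 'I_n) deg e i)%N.

Definition connected_graph n (e : rel 'I_n) := forall x y : 'I_n, connect e x y.

Definition irregular n (e : rel 'I_n) := exists i j : 'I_n, deg e i <> deg e j.

Definition adjmx (R : nzRingType) n (e : rel 'I_n) : 'M[R]_n :=
  \matrix_(i, j) (e i j)%:R.

Definition degmx (R : nzRingType) n (e : rel 'I_n) : 'M[R]_n :=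
  diag_mx (\row_i (deg e i)%:R).

Definition Qmx (R : nzRingType) n (e : rel 'I_n) : 'M[R]_n := degmx R e + adjmx R e.

Definition Aalpha (R : comNzRingType) n (e : rel 'I_n) (a : R) : 'M[R]_n :=
  a *: degmx R e + (1 - a) *: adjmx R e.

Definition is_rho (R : numFieldType) n (M : 'M[R]_n) (r : R) :=
  eigenvalue M r /\ forall a, eigenvalue M a -> a <= r.

(* For alpha <= 1/2 write A_alpha = alpha Q + (1 - 2 alpha) A, and for alpha >= 1/2
   write A_alpha = (1 - alpha) Q + (2 alpha - 1) D: both coefficients are nonnegative, so
   evaluating the Rayleigh quotient at an eigenvector of A_alpha bounds rho(A_alpha) by the
   same combination of the Rayleigh bounds rho(Q), rho(A) resp. rho(Q), Delta.
   If equality holds with both coefficients positive, that eigenvector maximises both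
   Rayleigh quotients; as the matrices are nonnegative, so does its entrywise absolute value,
   which is therefore a common nonnegative eigenvector of Q and A (resp. Q and D), hence of
   A and D = Q - A. By connectivity a nonnegative eigenvector of A has no zero entry, and
   being an eigenvector of D then forces all degrees to be equal. At alpha = 0, 1/2, 1 the
   matrix A_alpha is A, Q/2, D and equality is immediate. *)

From HB Require Import structures.
From mathcomp Require Import all_boot all_order all_algebra.
From mathcomp Require Import complex ring lra.
Set Implicit Arguments. Unset Strict Implicit. Unset Printing Implicit Defensive.
Import Order.TTheory GRing.Theory Num.Theory Num.Def.
Local Open Scope ring_scope.

Section QuadraticForms.
Variable R : realFieldType.

Definition qf n (M : 'M[R]_n) (x : 'rV_n) : R := (x *m M *m x^T) 0 0.
Definition bf n (M : 'M[R]_n) (x y : 'rV_n) : R := (x *m M *m y^T) 0 0.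
Definition sqnorm n (x : 'rV[R]_n) : R := (x *m x^T) 0 0.

Definition qf_bounded n (M : 'M[R]_n) (r : R) := forall x, qf M x <= r * sqnorm x.

Definition nonneg_mx m n (M : 'M[R]_(m, n)) := forall i j, 0 <= M i j.

Lemma mx00D (A B : 'M[R]_1) : (A + B) 0 0 = A 0 0 + B 0 0. Proof. by rewrite mxE. Qed.
Lemma mx00B (A B : 'M[R]_1) : (A - B) 0 0 = A 0 0 - B 0 0. Proof. by rewrite !mxE. Qed.
Lemma mx00Z a (A : 'M[R]_1) : (a *: A) 0 0 = a * A 0 0. Proof. by rewrite mxE. Qed.

Lemma bf_sym n (M : 'M[R]_n) x y : M^T = M -> bf M y x = bf M x y.
Proof.
move=> Msym; rewrite /bf.
have -> : y *m M *m x^T = (x *m M *m y^T)^T by rewrite !trmx_mul trmxK Msym mulmxA.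
by rewrite mxE.
Qed.

Lemma qf_addZ n (M : 'M[R]_n) x y t : M^T = M ->
  qf M (x + t *: y) = qf M x + 2 * t * bf M x y + t ^+ 2 * qf M y.
Proof.
move=> Msym; rewrite /qf linearD /= linearZ /= !mulmxDl !mulmxDr.
rewrite -!scalemxAl -!scalemxAr !mx00D !mx00Z -/(bf M x y) -/(bf M y x) bf_sym //.
rewrite -/(qf M x) -/(qf M y); ring.
Qed.

Lemma sqnormE n (x : 'rV[R]_n) : sqnorm x = \sum_j x 0 j ^+ 2.
Proof. by rewrite /sqnorm mxE; apply: eq_bigr => j _; rewrite mxE expr2. Qed.

Lemma rowV_neq0P n (x : 'rV[R]_n) : reflect (exists j, x 0 j != 0) (x != 0).
Proof.
apply: (iffP idP) => [xn0 | [j]]; last by apply: contraNneq => ->; rewrite mxE.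
apply/existsP; apply: contraR xn0 => /existsPn x0.
by apply/eqP/rowP => j; rewrite mxE; apply/eqP/negPn/x0.
Qed.

Lemma sqnorm_gt0 n (x : 'rV[R]_n) : x != 0 -> 0 < sqnorm x.
Proof.
case/rowV_neq0P=> j xj; rewrite sqnormE (bigD1 j) //=.
rewrite ltr_pwDl //; first by rewrite lt0r sqr_ge0 sqrf_eq0 xj.
by apply: sumr_ge0 => i _; apply: sqr_ge0.
Qed.

Lemma qf_eigen n (M : 'M[R]_n) r x : x *m M = r *: x -> qf M x = r * sqnorm x.
Proof. by move=> xM; rewrite /qf xM -scalemxAl mx00Z. Qed.

Lemma qfDZ n (M1 M2 : 'M[R]_n) a b x :
  qf (a *: M1 + b *: M2) x = a * qf M1 x + b * qf M2 x.
Proof. by rewrite /qf mulmxDr mulmxDl -!scalemxAr -!scalemxAl mx00D !mx00Z. Qed.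

Lemma psd_qf_eq0 n (N : 'M[R]_n) x : N^T = N -> (forall y, 0 <= qf N y) ->
  qf N x = 0 -> x *m N = 0.
Proof.
move=> Nsym Npsd Nx0.
(* 0 <= qf N (x + t y) = 2 t b + t^2 c with b = bf N x y, c = qf N y >= 0, and the
   choice t = -b / (c + 1) makes the right-hand side -t^2 (c + 2). *)
have bf0 y : bf N x y = 0.
  have qxy t := qf_addZ x y t Nsym; have c0 := Npsd y.
  move: (bf N x y) (qf N y) qxy c0 => b c qxy c0.
  pose t := - b / (c + 1); have c1 : 0 < c + 1 by rewrite ltr_wpDl.
  have bE : b = - t * (c + 1) by rewrite /t mulNr divfK ?opprK // lt0r_neq0.
  have := Npsd (x + t *: y); rewrite qxy Nx0 bE.
  by clearbody t => h; nra.
apply/rowP => j; rewrite mxE.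
by have := bf0 (delta_mx 0 j); rewrite /bf trmx_delta -colE !mxE.
Qed.

Lemma qf_bounded_eigen n (M : 'M[R]_n) r x : M^T = M -> qf_bounded M r ->
  qf M x = r * sqnorm x -> x *m M = r *: x.
Proof.
move=> Msym Mr xr; apply/eqP; rewrite eq_sym -subr_eq0 -mul_mx_scalar -mulmxBr.
have qfN y : qf (r%:M - M) y = r * sqnorm y - qf M y.
  by rewrite /qf mulmxBr mulmxBl mx00B mul_mx_scalar -scalemxAl mx00Z.
apply/eqP/psd_qf_eq0 => [|y|]; rewrite ?qfN ?subr_ge0 ?xr ?subrr //.
by rewrite linearB /= tr_scalar_mx Msym.
Qed.

Lemma eigenvalue_le_qf_bounded n (M : 'M[R]_n) a c :
  qf_bounded M c -> eigenvalue M a -> a <= c.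
Proof.
move=> Mc /eigenvalueP[v vM vn0].
by rewrite -(ler_pM2r (sqnorm_gt0 vn0)) -(qf_eigen vM).
Qed.

Lemma qf_boundedDZ n (M1 M2 : 'M[R]_n) a b r1 r2 : 0 <= a -> 0 <= b ->
  qf_bounded M1 r1 -> qf_bounded M2 r2 -> qf_bounded (a *: M1 + b *: M2) (a * r1 + b * r2).
Proof.
move=> a0 b0 M1r M2r x; rewrite qfDZ mulrDl -!mulrA.
by rewrite lerD // ler_wpM2l.
Qed.

Lemma qf_boundedDZ_eq n (M1 M2 : 'M[R]_n) a b r1 r2 : 0 < a -> 0 < b ->
  qf_bounded M1 r1 -> qf_bounded M2 r2 -> eigenvalue (a *: M1 + b *: M2) (a * r1 + b * r2) ->
  exists2 x : 'rV_n, x != 0 & qf M1 x = r1 * sqnorm x /\ qf M2 x = r2 * sqnorm x.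
Proof.
move=> a0 b0 M1r M2r /eigenvalueP[x xM xn0]; exists x => //.
move: (qf_eigen xM) (M1r x) (M2r x); rewrite qfDZ.
by move: (qf M1 x) (qf M2 x) (sqnorm x) => p q s; split; nra.
Qed.

Lemma rho_uniq n (M : 'M[R]_n) r1 r2 : is_rho M r1 -> is_rho M r2 -> r1 = r2.
Proof. by move=> [M1 r1_max] [M2 r2_max]; apply/le_anti; rewrite r1_max ?r2_max. Qed.

Lemma rho_scale n (M : 'M[R]_n) r c : 0 < c -> is_rho M r -> is_rho (c *: M) (c * r).
Proof.
move=> c0 [/eigenvalueP[v vM vn0] r_max]; split.
  by apply/eigenvalueP; exists v; rewrite // -scalemxAr vM scalerA mulrC.
move=> a /eigenvalueP[w wM wn0]; rewrite mulrC -ler_pdivrMr //; apply: r_max.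
apply/eigenvalueP; exists w => //; apply: (scalerI (lt0r_neq0 c0)).
by rewrite scalemxAr wM scalerA mulrC divfK // lt0r_neq0.
Qed.

Lemma qf_le_norm n (M : 'M[R]_n) x : nonneg_mx M -> qf M x <= qf M (map_mx normr x).
Proof.
move=> M0; rewrite /qf !mxE; apply: ler_sum => j _.
rewrite !mxE !mulr_suml; apply: ler_sum => k _; rewrite !mxE.
by rewrite (le_trans (ler_norm _)) // !normrM (ger0_norm (M0 _ _)).
Qed.

Lemma sqnorm_norm n (x : 'rV[R]_n) : sqnorm (map_mx normr x) = sqnorm x.
Proof. by rewrite !sqnormE; apply: eq_bigr => j _; rewrite mxE real_normK ?num_real. Qed.

Lemma map_norm_eq0 n (x : 'rV[R]_n) : (map_mx normr x == 0) = (x == 0).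
Proof.
apply/eqP/eqP => [/rowP x0 | ->]; last by apply/rowP => j; rewrite !mxE normr0.
by apply/rowP => j; have /eqP := x0 j; rewrite !mxE normr_eq0 => /eqP.
Qed.

Lemma nonneg_common_eigenvector n (M1 M2 : 'M[R]_n) a b r1 r2 :
  0 < a -> 0 < b -> M1^T = M1 -> M2^T = M2 -> nonneg_mx M1 -> nonneg_mx M2 ->
  qf_bounded M1 r1 -> qf_bounded M2 r2 -> eigenvalue (a *: M1 + b *: M2) (a * r1 + b * r2) ->
  exists2 z : 'rV_n, z != 0 /\ nonneg_mx z & z *m M1 = r1 *: z /\ z *m M2 = r2 *: z.
Proof.
move=> a0 b0 M1sym M2sym M1_0 M2_0 M1r M2r eig.
have [x xn0 [M1x M2x]] := qf_boundedDZ_eq a0 b0 M1r M2r eig.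
have norm_eq M r : nonneg_mx M -> qf_bounded M r -> qf M x = r * sqnorm x ->
    qf M (map_mx normr x) = r * sqnorm (map_mx normr x).
  move=> M0 Mr Mx; apply/le_anti; rewrite Mr sqnorm_norm -Mx.
  exact: qf_le_norm.
exists (map_mx normr x); first by rewrite map_norm_eq0; split=> // i j; rewrite mxE.
by split; apply: qf_bounded_eigen => //; apply: norm_eq.
Qed.
End QuadraticForms.

Section SpectralBound.
Variable C : numClosedFieldType.
Local Open Scope sesquilinear_scope.

Lemma eigenvalue_spectral_diag n (A : 'M[C]_n) j :
  A \is normalmx -> eigenvalue A (spectral_diag A 0 j).
Proof.
move=> /orthomx_spectralP AE; set P := spectralmx A in AE *.
have Pu : P \is unitarymx := spectral_unitarymx A.
apply/eigenvalueP; exists (row j P).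
  rewrite -row_mul {1}AE !mulmxA mulmxV ?unitarymx_unit // mul1mx.
  apply/rowP => k; rewrite !mxE (bigD1 j) //= big1 ?addr0 => [|i ij].
    by rewrite !mxE eqxx mulr1n.
  by rewrite !mxE eq_sym (negbTE ij) mulr0n mul0r.
apply/eqP => Pj0; have /rowP/(_ j) := congr1 (row j) (unitarymxP Pu).
by rewrite row_mul Pj0 mul0mx !mxE eqxx => /eqP; rewrite eq_sym oner_eq0.
Qed.

Lemma normalmx_qf_le n (A : 'M[C]_n) c : A \is normalmx ->
  (forall j, spectral_diag A 0 j <= c) ->
  forall x : 'rV_n, (x *m A *m x ^t*) 0 0 <= c * (x *m x ^t*) 0 0.
Proof.
move=> /orthomx_spectralP AE d_le x; set P := spectralmx A in AE.
have Pu : P \is unitarymx := spectral_unitarymx A.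
have PV : invmx P = P ^t* := invmx_unitary Pu.
set y := x *m P ^t*.
have yC : y ^t* = P *m x ^t* by rewrite /y trmx_mul map_mxM trmxCK.
have -> : x *m A *m x ^t* = y *m diag_mx (spectral_diag A) *m y ^t*.
  by rewrite yC {1}AE PV /y !mulmxA.
have -> : x *m x ^t* = y *m y ^t*.
  by rewrite yC /y !mulmxA -(mulmxA x) -PV mulVmx ?unitarymx_unit // mulmx1.
rewrite mul_mx_diag !mxE mulr_sumr -subr_ge0 -sumrB; apply: sumr_ge0 => j _.
rewrite !mxE mulrAC [_ * spectral_diag A 0 j]mulrC -mulrBl.
by apply: mulr_ge0; [rewrite subr_ge0 | apply: mul_conjC_ge0].
Qed.

End SpectralBound.

Section Rayleigh.
Variable R : rcfType.
Local Notation toC := (real_complex R).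
Local Open Scope sesquilinear_scope.

Lemma real_complex_real (a : R) : toC a \is Num.real.
Proof. by apply/complex_realP; exists a. Qed.

Lemma map_real_complex_hermsym n (M : 'M[R]_n) :
  M^T = M -> map_mx toC M \is hermsymmx.
Proof.
move=> Msym; apply: realsym_hermsym.
  apply/is_hermitianmxP; rewrite expr0 scale1r map_mx_id //.
  by apply/matrixP => i j; rewrite !mxE -[in RHS]Msym mxE.
by apply/mxOverP => i j; rewrite mxE real_complex_real.
Qed.

Lemma rho_qf_bounded n (M : 'M[R]_n) r : M^T = M -> is_rho M r -> qf_bounded M r.
Proof.
move=> Msym [_ r_max] x; set MC := map_mx toC M.
have MCherm : MC \is hermsymmx := map_real_complex_hermsym Msym.
have d_le j : spectral_diag MC 0 j <= toC r.
  have := eigenvalue_spectral_diag j (hermitian_normalmx MCherm).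
  have /complex_realP[a ->] := mxOverP (hermitian_spectral_diag_real MCherm) 0 j.
  by rewrite eigenvalue_map lecR => /r_max.
set xc := map_mx toC x.
have xcC : xc ^t* = xc^T.
  by apply/matrixP => i j; rewrite !mxE conj_Creal // real_complex_real.
have qfC : toC (qf M x) = (xc *m MC *m xc ^t*) 0 0.
  by rewrite xcC map_trmx /xc /MC -!map_mxM [RHS]mxE.
have sqnormC : toC (sqnorm x) = (xc *m xc ^t*) 0 0.
  by rewrite xcC map_trmx /xc -!map_mxM [RHS]mxE.
have rC : toC (r * sqnorm x) = toC r * (xc *m xc ^t*) 0 0 by rewrite -sqnormC rmorphM.
rewrite -lecR qfC rC.
exact: normalmx_qf_le (hermitian_normalmx MCherm) d_le xc.
Qed.
End Rayleigh.

Section GraphMatrices.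
Variables (R : realFieldType) (n : nat) (e : rel 'I_n).
Hypothesis e_sym : symmetric e.
Local Notation A := (adjmx R e).
Local Notation D := (degmx R e).
Local Notation Q := (Qmx R e).
Local Notation Delta := ((maxdeg e)%:R : R).

Lemma adjmx_sym : A^T = A.
Proof. by apply/matrixP => i j; rewrite !mxE e_sym. Qed.

Lemma degmx_sym : D^T = D.
Proof. exact: tr_diag_mx. Qed.

Lemma Qmx_sym : Q^T = Q.
Proof. by rewrite /Qmx linearD /= adjmx_sym degmx_sym. Qed.

Lemma adjmx_ge0 : nonneg_mx A.
Proof. by move=> i j; rewrite mxE ler0n. Qed.

Lemma degmx_ge0 : nonneg_mx D.
Proof. by move=> i j; rewrite !mxE mulrn_wge0 // mxE ler0n. Qed.

Lemma Qmx_ge0 : nonneg_mx Q.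
Proof. by move=> i j; rewrite mxE addr_ge0 // (adjmx_ge0, degmx_ge0). Qed.

Lemma Aalpha_QA a : Aalpha e a = a *: Q + (1 - 2 * a) *: A.
Proof. by apply/matrixP => i j; rewrite !mxE; ring. Qed.

Lemma Aalpha_QD a : Aalpha e a = (1 - a) *: Q + (2 * a - 1) *: D.
Proof. by apply/matrixP => i j; rewrite !mxE; ring. Qed.

Lemma Aalpha0 : Aalpha e 0 = A.
Proof. by rewrite /Aalpha scale0r add0r subr0 scale1r. Qed.

Lemma Aalpha1 : Aalpha e 1 = D.
Proof. by rewrite /Aalpha subrr scale0r addr0 scale1r. Qed.

Lemma Aalpha_half : Aalpha e (1 / 2) = (1 / 2) *: Q.
Proof. by rewrite Aalpha_QA mul1r divff ?pnatr_eq0 // subrr scale0r addr0. Qed.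

Lemma mul_degmx (z : 'rV[R]_n) i : (z *m D) 0 i = z 0 i * (deg e i)%:R.
Proof. by rewrite mul_mx_diag !mxE. Qed.

Lemma qf_bounded_degmx : qf_bounded D Delta.
Proof.
move=> x; rewrite /qf [X in X <= _]mxE sqnormE mulr_sumr; apply: ler_sum => j _.
rewrite mul_degmx mxE mulrAC mulrC -expr2 ler_wpM2r ?sqr_ge0 // ler_nat.
exact: leq_bigmax.
Qed.

Lemma rho_degmx r : is_rho D r -> r = Delta.
Proof.
move=> [D_r r_max]; apply/le_anti.
rewrite (eigenvalue_le_qf_bounded qf_bounded_degmx D_r) r_max //.
case/eigenvalueP: D_r => v _ /rowV_neq0P[i0 _].
set i := [arg max_(i > i0) deg e i].
have Delta_i : maxdeg e = deg e i by exact: bigmax_eq_arg.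
apply/eigenvalueP; exists (delta_mx 0 i).
  apply/rowP => j; rewrite mul_degmx !mxE Delta_i.
  by have [->|] := eqVneq j i; rewrite ?mulr1 ?mul1r ?mulr0 ?mul0r.
by apply/rowV_neq0P; exists i; rewrite mxE !eqxx oner_eq0.
Qed.

Lemma nonneg_eigenvector_adjmx_neq0 (z : 'rV[R]_n) a :
  connected_graph e -> nonneg_mx z -> z != 0 -> z *m A = a *: z ->
  forall i, z 0 i != 0.
Proof.
move=> e_conn z_ge0 zn0 zA.
have z0_nbr i j : z 0 i = 0 -> e i j -> z 0 j = 0.
  move=> zi0 eij; have /rowP/(_ i) := zA; rewrite !mxE zi0 mulr0 => sum0.
  have : z 0 j * A j i = 0.
    by apply: (psumr_eq0P _ sum0) => // k _; rewrite mulr_ge0 ?adjmx_ge0.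
  by rewrite mxE e_sym eij mulr1.
move=> i; apply: contraNneq zn0 => zi0; apply/eqP/rowP => k; rewrite mxE.
have /connectP[p p_path ->] := e_conn i k.
elim: p i zi0 p_path => [|j p IHp] i zi0 //= /andP[eij p_path].
exact: IHp (z0_nbr i j zi0 eij) p_path.
Qed.

Lemma regular_of_degmx_eigenvector (z : 'rV[R]_n) d :
  (forall i, z 0 i != 0) -> z *m D = d *: z -> ~ irregular e.
Proof.
move=> zn0 zD [i [j]]; apply; apply/eqP.
have deg_d k : (deg e k)%:R = d.
  by have /rowP/(_ k) := zD; rewrite mul_degmx mxE mulrC => /(mulIf (zn0 k)).
by rewrite -(eqr_nat R) !deg_d.
Qed.

Lemma irregular_no_common_eigenvector (z : 'rV[R]_n) a d :
  connected_graph e -> irregular e -> nonneg_mx z -> z != 0 ->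
  z *m A = a *: z -> z *m D = d *: z -> False.
Proof.
move=> e_conn e_irr z_ge0 zn0 zA zD.
have z_neq0 := nonneg_eigenvector_adjmx_neq0 e_conn z_ge0 zn0 zA.
exact: regular_of_degmx_eigenvector z_neq0 zD e_irr.
Qed.
End GraphMatrices.

Section SpectralRadii.
Variables (R : rcfType) (n : nat) (e : rel 'I_n) (rA rQ : R).
Hypothesis e_sym : symmetric e.
Hypothesis A_rA : is_rho (adjmx R e) rA.
Hypothesis Q_rQ : is_rho (Qmx R e) rQ.
Local Notation A := (adjmx R e).
Local Notation Q := (Qmx R e).
Local Notation Delta := ((maxdeg e)%:R : R).

Let A_bounded : qf_bounded A rA := rho_qf_bounded (adjmx_sym R e_sym) A_rA.
Let Q_bounded : qf_bounded Q rQ := rho_qf_bounded (Qmx_sym R e_sym) Q_rQ.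

Lemma rho_Aalpha_le_QA (a r : R) : 0 <= a <= 1 / 2 -> is_rho (Aalpha e a) r ->
  r <= a * rQ + (1 - 2 * a) * rA.
Proof.
move=> /andP[a_ge0 a_le] [Aa_r _]; apply: eigenvalue_le_qf_bounded Aa_r.
by rewrite Aalpha_QA; apply: qf_boundedDZ => //; lra.
Qed.

Lemma rho_Aalpha_le_QD (a r : R) : 1 / 2 <= a <= 1 -> is_rho (Aalpha e a) r ->
  r <= (1 - a) * rQ + (2 * a - 1) * Delta.
Proof.
move=> /andP[a_ge a_le1] [Aa_r _]; apply: eigenvalue_le_qf_bounded Aa_r.
rewrite Aalpha_QD; apply: qf_boundedDZ (qf_bounded_degmx _) => //; lra.
Qed.

Hypotheses (e_conn : connected_graph e) (e_irr : irregular e).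

Lemma rho_Aalpha_eq_QA (a r : R) : 0 <= a <= 1 / 2 -> is_rho (Aalpha e a) r ->
  r = a * rQ + (1 - 2 * a) * rA <-> a = 0 \/ a = 1 / 2.
Proof.
move=> /andP[a_ge0 a_le] Aa_r; split => [r_eq | [a0 | a_half]].
- have [a0|an0] := eqVneq a 0; first by left.
  have [a_half|an_half] := eqVneq a (1 / 2); first by right.
  have a_gt0 : 0 < a by rewrite lt_def an0.
  have a_lt : a < 1 / 2 by rewrite lt_def eq_sym an_half.
  have b_gt0 : 0 < 1 - 2 * a by lra.
  case: Aa_r => + _; rewrite Aalpha_QA r_eq => eig.
  have [z [zn0 z_ge0] [zQ zA]] := nonneg_common_eigenvector a_gt0 b_gt0
    (Qmx_sym R e_sym) (adjmx_sym R e_sym) (@Qmx_ge0 R n e) (@adjmx_ge0 R n e)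
    Q_bounded A_bounded eig.
  exfalso; apply: (irregular_no_common_eigenvector e_sym e_conn e_irr z_ge0 zn0 zA
    (d := rQ - rA)).
  by rewrite scalerBl -zQ -zA /Qmx mulmxDr addrK.
- by rewrite a0 Aalpha0 in Aa_r; rewrite a0 (rho_uniq Aa_r A_rA); ring.
- rewrite a_half Aalpha_half in Aa_r.
  by rewrite a_half (rho_uniq Aa_r (rho_scale _ Q_rQ)) //; lra.
Qed.

Lemma rho_Aalpha_eq_QD (a r : R) : 1 / 2 <= a <= 1 -> is_rho (Aalpha e a) r ->
  r = (1 - a) * rQ + (2 * a - 1) * Delta <-> a = 1 / 2 \/ a = 1.
Proof.
move=> /andP[a_ge a_le1] Aa_r; split => [r_eq | [a_half | a1]].
- have [a_half|an_half] := eqVneq a (1 / 2); first by left.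
  have [a1|an1] := eqVneq a 1; first by right.
  have a_gt : 1 / 2 < a by rewrite lt_def an_half.
  have a_lt1 : a < 1 by rewrite lt_def eq_sym an1.
  have a_gt0 : 0 < 1 - a by lra.
  have b_gt0 : 0 < 2 * a - 1 by lra.
  case: Aa_r => + _; rewrite Aalpha_QD r_eq => eig.
  have [z [zn0 z_ge0] [zQ zD]] := nonneg_common_eigenvector a_gt0 b_gt0
    (Qmx_sym R e_sym) (degmx_sym _ e) (@Qmx_ge0 R n e) (@degmx_ge0 R n e)
    Q_bounded (qf_bounded_degmx e) eig.
  exfalso; apply: (irregular_no_common_eigenvector e_sym e_conn e_irr z_ge0 zn0
    (a := rQ - Delta) _ zD).
  by rewrite scalerBl -zQ -zD /Qmx mulmxDr addrAC subrr add0r.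
- rewrite a_half Aalpha_half in Aa_r.
  by rewrite a_half (rho_uniq Aa_r (rho_scale _ Q_rQ)) //; lra.
- by rewrite a1 Aalpha1 in Aa_r; rewrite a1 (rho_degmx Aa_r); lra.
Qed.
End SpectralRadii.

Theorem proposition9 (R : rcfType) (n : nat) (e : rel 'I_n)
    (alpha rA rQ rAa : R) :
  simple_graph e ->
  is_rho (adjmx R e) rA ->
  is_rho (Qmx R e) rQ ->
  is_rho (Aalpha e alpha) rAa ->
  ((0 <= alpha <= 1 / 2 ->
      rAa <= alpha * rQ + (1 - 2 * alpha) * rA /\
      (connected_graph e -> irregular e ->
         (rAa = alpha * rQ + (1 - 2 * alpha) * rA <->
          alpha = 0 \/ alpha = 1 / 2)))
   /\
   (1 / 2 <= alpha <= 1 ->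
      rAa <= (1 - alpha) * rQ + (2 * alpha - 1) * (maxdeg e)%:R /\
      (connected_graph e -> irregular e ->
         (rAa = (1 - alpha) * rQ + (2 * alpha - 1) * (maxdeg e)%:R <->
          alpha = 1 / 2 \/ alpha = 1)))).
Proof.
move=> [e_sym _] A_rA Q_rQ Aa_r; split=> alpha_range; split.
- exact (rho_Aalpha_le_QA e_sym A_rA Q_rQ alpha_range Aa_r).
- move=> e_conn e_irr.
  exact (rho_Aalpha_eq_QA e_sym A_rA Q_rQ e_conn e_irr alpha_range Aa_r).
- exact (rho_Aalpha_le_QD e_sym Q_rQ alpha_range Aa_r).
- move=> e_conn e_irr.
  exact (rho_Aalpha_eq_QD e_sym Q_rQ e_conn e_irr alpha_range Aa_r).
Qed.
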